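(* For every deterministic local policy D-Local there exists a collectible reward decomposition MDP with $n$ rewards and discount factor $\gamma=1-1/n$ such that $\frac{\text{D-Local}}{\text{OPT}}\le\frac{24}{n}$, where D-Local also denotes the value of the policy on that MDP.
   Context: A collectible reward decomposition MDP is an MDP with deterministic dynamics, an initial state $s_0$, discount $\gamma$, and $n$ reward states $s_1,\dots,s_n$; visiting $s_i$ for the first time yields reward $1$ and each reward can be collected only once. For each $j$ there is an option $o_j$ that follows a shortest path to $s_j$ and terminates when collecting it; its value from state $x$ is $V_j(x)=\gamma^{d(x,s_j)}$ where $d$ is shortest-path distance. A local policy is a mapping $\pi(x,h,\{V_i(x)\}_{i=1}^n)\to\Delta(\{o_i\}_{i=1}^n)$ from the current state $x$, the history $h$ of previous steps (including which rewards were collected) and the option values at $x$, to a distribution over options; it is deterministic if it always outputs a point mass. The value of a policy is its expected discounted return $\sum_k\gamma^{T_k}$ ($T_k$ the time the $k$-th reward is collected), and $\text{OPT}$ is the maximum over all orders of collecting the rewards of the discounted return, i.e. $\max_{(i_1,\dots,i_n)}\sum_{j=0}^{n-1}\gamma^{\sum_{t=0}^{j}d_{i_t,i_{t+1}}}$ with $i_0=s_0$. *)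

From HB Require Import structures.
From mathcomp Require Import all_boot all_order all_algebra all_fingroup.
From mathcomp Require Import boolp.
Set Implicit Arguments. Unset Strict Implicit. Unset Printing Implicit Defensive.
Import Order.TTheory GRing.Theory Num.Theory.
Local Open Scope ring_scope.

(* A deterministic MDP on the finite state space 'I_nS; the transition
   relation [adj] lists the states reachable in one step (one per action).
   It has an initial state, n reward states, and for each reward j an option
   whose one-step policy is [opt j] (it must follow a shortest path). *)
Record crd_mdp (n : nat) := CRD {
  nS : nat;
  adj : rel 'I_nS;
  s0 : 'I_nS;
  srew : 'I_n -> 'I_nS;
  opt : 'I_n -> 'I_nS -> 'I_nS }.
Arguments nS {n} c.
Arguments adj {n} c _ _.
Arguments s0 {n} c.
Arguments srew {n} c _.
Arguments opt {n} c _ _.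

Fixpoint reachb (T : finType) (e : rel T) (k : nat) (x y : T) : bool :=
  match k with
  | 0 => x == y
  | k'.+1 => [exists z, e x z && reachb e k' z y]
  end.

(* shortest-path distance (0 if unreachable; excluded by well-formedness) *)
Definition dist (T : finType) (e : rel T) (x y : T) : nat :=
  match pselect (exists k, reachb e k x y) with
  | left H => @ex_minn (fun k => reachb e k x y) H
  | right _ => 0%N
  end.

Definition crd_wf n (M : crd_mdp n) : Prop :=
  injective (srew M) /\
  (forall x j, exists k, reachb (adj M) k x (srew M j)) /\
  (forall x j, x != srew M j ->
     adj M x (opt M j x) /\
     (dist (adj M) (opt M j x) (srew M j)).+1 = dist (adj M) x (srew M j)).

(* History available to the policy: the sequence of states visited so far
   (index = time step, last = current state), the previous decisions
   (state, option values observed there, option chosen), and the set of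
   rewards already collected. States are given by their labels (nat). *)
Record history (R : Type) (n : nat) := Hist {
  h_visits : seq nat;
  h_decisions : seq (nat * ('I_n -> R) * 'I_n);
  h_collected : {set 'I_n} }.

(* deterministic local policy: (state, history, option values) -> option *)
Definition det_local_policy (R : Type) (n : nat) :=
  nat -> history R n -> ('I_n -> R) -> 'I_n.

Section Run.
Variables (R : realFieldType) (n : nat) (M : crd_mdp n) (g : R)
          (pi : det_local_policy R n).

Definition optval (x : 'I_(nS M)) (i : 'I_n) : R :=
  g ^+ dist (adj M) x (srew M i).

Definition run_step (c : seq 'I_(nS M) * seq (nat * ('I_n -> R) * 'I_n)) :=
  let: (vis, hs) := c in
  let x := last (s0 M) vis in
  let vals := optval x in
  let H := Hist (map val vis) hs [set i | srew M i \in vis] in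
  let j := pi (val x) H vals in
  let path := [seq iter m (opt M j) x | m <- iota 1 (dist (adj M) x (srew M j))] in
  (vis ++ path, rcons hs (val x, vals, j)).

Definition run k := iter k run_step ([:: s0 M], [::]).

(* trajectory after k option executions; position t is the state at time t *)
Definition visited k := (run k).1.

Definition at_time (i : 'I_n) : pred nat := fun t =>
  `[< exists k, (t < size (visited k))%N /\ nth (s0 M) (visited k) t = srew M i >].

Definition policy_value : R :=
  \sum_(i < n) match pselect (exists t, at_time i t) with
               | left H => g ^+ (@ex_minn (at_time i) H)
               | right _ => 0
               end.

Definition order_path (p : {perm 'I_n}) : seq 'I_(nS M) :=
  s0 M :: [seq srew M (p i) | i <- enum 'I_n].

Definition OPT : R :=
  \big[Num.max/0]_(p : {perm 'I_n})
    \sum_(j < n) g ^+ (\sum_(t < j.+1)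
       dist (adj M) (nth (s0 M) (order_path p) t)
                       (nth (s0 M) (order_path p) t.+1))%N.
End Run.

From HB Require Import structures.
From mathcomp Require Import all_boot all_order all_algebra all_fingroup.
From mathcomp Require Import boolp.
From mathcomp Require Import zify ring lra.
Set Implicit Arguments. Unset Strict Implicit. Unset Printing Implicit Defensive.
Import Order.TTheory GRing.Theory Num.Theory.
Local Open Scope ring_scope.

(* The MDP is built after the policy.  From the start state every reward is at
   distance 1, so all option values equal gamma and the first option j0 chosen
   by the policy depends on the policy alone.  Reward j0 is placed at the
   entrance of a one-way chain of length n^2 leading back to the start, the
   other rewards form a clique with the start.  The policy collects j0 at time 1
   and every other reward after time n^2, so its value is at most
   1 + n gamma^(n^2) <= 2, while collecting the clique first earns at least
   sum_(j < n-1) (1 - (j+1)/n) = (n-1)/2; both bounds come from Bernoulli's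
   inequality.  For n = 1 a single state suffices. *)

Section Distance.
Variables (T : finType) (e : rel T).

Lemma dist_min k x y : reachb e k x y -> (dist e x y <= k)%N.
Proof.
move=> xy; rewrite /dist; case: pselect => [ex|[]]; last by exists k.
by case: ex_minnP => m _ /(_ k xy).
Qed.

Lemma reachb_dist x y : (exists k, reachb e k x y) -> reachb e (dist e x y) x y.
Proof. by move=> ex; rewrite /dist; case: pselect => // ?; case: ex_minnP. Qed.

Lemma path_reachb x s k :
  path e x s -> (k <= size s)%N -> reachb e k x (nth x (x :: s) k).
Proof.
elim: s x k => [|z s IH] x [|k] //=; try by rewrite eqxx.
case/andP=> exz zs ks; apply/existsP; exists z; rewrite exz /=.
by rewrite (set_nth_default z) // IH.
Qed.

Section Potential.
Variables (y : T) (h : T -> nat).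
Hypothesis h_target : h y = 0%N.
Hypothesis h_descent : forall x, x != y -> exists2 z, e x z & (h z).+1 = h x.

Lemma reachb_potential x : reachb e (h x) x y.
Proof.
have [k hx] : exists k, h x = k by exists (h x).
rewrite hx; elim: k x hx => [|k IH] x hx /=.
  by case: (eqVneq x y) => // /h_descent [z _]; rewrite hx.
case: (eqVneq x y) => [xy|/h_descent [z exz]]; first by rewrite xy h_target in hx.
by rewrite hx => -[hz]; apply/existsP; exists z; rewrite exz IH.
Qed.

Hypothesis h_lipschitz : forall x z, e x z -> (h x <= (h z).+1)%N.

Lemma potential_le_reachb k x : reachb e k x y -> (h x <= k)%N.
Proof.
elim: k x => [|k IH] x /=; first by move/eqP->; rewrite h_target.
by case/existsP=> z /andP[/h_lipschitz xz /IH zk]; apply: leq_trans xz _.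
Qed.

Lemma dist_potential x : dist e x y = h x.
Proof.
apply/eqP; rewrite eqn_leq dist_min ?reachb_potential //=.
by apply/potential_le_reachb/reachb_dist; exists (h x); apply: reachb_potential.
Qed.

End Potential.
End Distance.

Section Discount.
Variable R : realFieldType.

Lemma bernoulli_ineq (x : R) k : -1 <= x -> 1 + k%:R * x <= (1 + x) ^+ k.
Proof.
move=> x_ge; elim: k => [|k IH]; first by rewrite mul0r addr0 expr0.
have x1_ge0 : 0 <= 1 + x by rewrite -lerBlDl sub0r.
rewrite exprSr -natr1; apply: le_trans (ler_wpM2r x1_ge0 IH).
have := ler0n R k; nra.
Qed.

Lemma sum_linear_discount n : (0 < n)%N ->
  \sum_(j < n.-1) (1 - j.+1%:R / n%:R) = n.-1%:R / 2 :> R.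
Proof.
case: n => // m _ /=.
have tri : ((\sum_(j < m) j.+1) * 2 = m * m.+1)%N.
  elim: m => [|m IH]; first by rewrite big_ord0.
  by rewrite big_ord_recr /= mulnDl IH; nia.
rewrite sumrB sumr_const card_ord -mulr_suml -natr_sum.
have -> : (\sum_(j < m) j.+1)%N%:R = (m * m.+1)%:R / 2 :> R.
  by rewrite -tri natrM mulfK ?pnatr_eq0.
by rewrite natrM; field; rewrite addrC natr1 pnatr_eq0.
Qed.

Lemma discount_ge0 n : (0 < n)%N -> 0 <= 1 - n%:R^-1 :> R.
Proof. by move=> n_gt0; rewrite subr_ge0 invf_le1 ?ler1n ?ltr0n. Qed.

Lemma discount_le1 n : 1 - n%:R^-1 <= 1 :> R.
Proof. by rewrite lerBlDr lerDl invr_ge0. Qed.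

Lemma bernoulli_discount n k : (0 < n)%N -> 1 - k%:R / n%:R <= (1 - n%:R^-1) ^+ k :> R.
Proof.
move=> n_gt0; rewrite -mulrN; apply: bernoulli_ineq.
by rewrite lerNl opprK invf_le1 ?ler1n ?ltr0n.
Qed.

Lemma discount_pow_sq_le n :
  (1 < n)%N -> n%:R * (1 - n%:R^-1) ^+ (n * n) <= 1 :> R.
Proof.
move=> n_gt1; set g : R := 1 - n%:R^-1; pose x : R := n.-1%:R^-1.
have nE : n%:R = n.-1%:R + 1 :> R by rewrite natr1 prednK // ltnW.
have m_gt0 : 0 < n.-1%:R :> R by rewrite ltr0n; lia.
have x_gt0 : 0 < x by rewrite invr_gt0.
have gx : g * (1 + x) = 1.
  by rewrite /g /x nE; field; rewrite ?gt_eqF // addr_gt0.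
have n_le : n%:R <= 1 + (n * n)%:R * x.
  have -> : (n * n)%:R * x = n.-1%:R + 2 + x by rewrite natrM nE /x; field; rewrite gt_eqF.
  rewrite nE; lra.
have g_ge0 : 0 <= g by apply: discount_ge0; lia.
apply: (@le_trans _ _ (g ^+ (n * n) * (1 + x) ^+ (n * n))).
  rewrite mulrC ler_wpM2l ?exprn_ge0 //.
  by apply: le_trans n_le (bernoulli_ineq _ _); lra.
by rewrite -exprMn gx expr1n.
Qed.
End Discount.

Section Run.
Variables (R : realFieldType) (n : nat) (M : crd_mdp n) (g : R)
          (pi : det_local_policy R n).
Local Notation visited := (visited M g pi).
Local Notation at_time := (at_time M g pi).

Definition option_path (x : 'I_(nS M)) (j : 'I_n) :=
  [seq iter m (opt M j) x | m <- iota 1 (dist (adj M) x (srew M j))].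

Lemma visited_one : visited 1 = s0 M :: option_path (s0 M)
  (pi (val (s0 M)) (Hist [:: val (s0 M)] [::] [set i | srew M i \in [:: s0 M]])
      (optval g (s0 M))).
Proof. by []. Qed.

Lemma visitedS k : exists j,
  visited k.+1 = visited k ++ option_path (last (s0 M) (visited k)) j.
Proof. by rewrite /visited /run iterS; case: (iter k _ _) => vis hs; eexists. Qed.

Lemma policy_value_le (j : 'I_n) (T : nat) : 0 <= g -> g <= 1 ->
  (forall i t, i != j -> at_time i t -> (T <= t)%N) ->
  policy_value M g pi <= 1 + n%:R * g ^+ T.
Proof.
move=> g_ge0 g_le1 late; rewrite /policy_value (bigD1 j) //=; apply: lerD.
  by case: pselect => [ex|_] //; apply: exprn_ile1.
have -> : n%:R * g ^+ T = \sum_(i < n) g ^+ T by rewrite sumr_const card_ord mulr_natl.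
rewrite [leRHS](bigD1 j) //= -[leLHS]add0r; apply: lerD; first exact: exprn_ge0.
apply: ler_sum => i ji; case: pselect => [ex|_]; last exact: exprn_ge0.
by case: ex_minnP => t it _; exact: ler_wiXn2l g_ge0 g_le1 _ _ (late _ _ ji it).
Qed.

Definition order_time (p : {perm 'I_n}) (j : nat) : nat :=
  \sum_(t < j.+1)
    dist (adj M) (nth (s0 M) (order_path M p) t) (nth (s0 M) (order_path M p) t.+1).

Lemma OPT_ge_order p : \sum_(j < n) g ^+ order_time p j <= OPT M g.
Proof. exact: (le_bigmax _ _ p). Qed.

Hypothesis M_wf : crd_wf M.

Lemma path_option_path x j : path (adj M) x (option_path x j).
Proof.
have [_ [_ descent]] := M_wf; rewrite /option_path.
have [d dx] : exists d, dist (adj M) x (srew M j) = d by eexists.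
rewrite dx; elim: d x dx => [|d IH] x dx //=.
have xj : x != srew M j.
  apply/eqP => xj; have := @dist_min _ (adj M) 0 x (srew M j).
  by rewrite dx xj /= eqxx => /(_ isT).
have [xz dz] := descent x j xj; rewrite dx in dz; case: dz => dz.
rewrite xz /= -[2%N]/(1 + 1)%N iotaDl -map_comp.
have := IH _ dz; congr (path _ _ _); apply: eq_map => m /=.
by rewrite add0n -iterS iterSr.
Qed.

Lemma visited_extend m k : exists2 s,
  visited (m + k) = visited m ++ s & path (adj M) (last (s0 M) (visited m)) s.
Proof.
elim: k => [|k [s vk ms]]; first by exists [::]; rewrite ?addn0 ?cats0.
rewrite addnS; have [j ->] := visitedS (m + k); rewrite vk -catA.
by eexists; rewrite // cat_path ms last_cat path_option_path.
Qed.

Lemma dist_lt_at_time y i t : visited 1 = [:: s0 M; y] -> srew M i != s0 M ->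
  at_time i t -> (dist (adj M) y (srew M i) < t)%N.
Proof.
move=> v1 i0 /asboolP[k [tk ik]]; case: t tk ik => [|t] tk ik.
  have [s vk _] := visited_extend 0 k; rewrite add0n in vk.
  by rewrite vk /= in ik; rewrite ik eqxx in i0.
case: k tk ik => [|k] // tk ik; have [s vk ys] := visited_extend 1 k.
rewrite add1n in vk; rewrite v1 in ys; rewrite vk v1 /= ltnS in tk ik.
rewrite (set_nth_default y) // in ik.
by rewrite ltnS -ik; apply/dist_min/path_reachb.
Qed.
End Run.

Section TrapGraph.
Variables (n L : nat).
Local Notation N := (n + L)%N.

(* States 0..n form a clique, 0 being the start; n+1..N is a one-way chain,
   entered only from 0 and left only from N, back to 0.  Targets y always lie
   in [1, n+1]. *)
Definition trap_adj (x z : nat) : bool :=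
  [|| (x <= n) && (z <= n), (x == 0) && (z == n.+1),
      (n < x < N) && (z == x.+1) | (x == N) && (z == 0)]%N.

Definition trap_next (y x : nat) : nat :=
  if (x <= n)%N then (if (y <= n)%N || (x == 0%N) then y else 0%N)
  else if x == N then 0%N else x.+1.

Definition trap_dist (y x : nat) : nat :=
  if x == y then 0%N
  else if (x <= n)%N then (if (n < y)%N && (x != 0%N) then 2 else 1)%N
  else (N - x).+2.

Hypothesis L_gt0 : (0 < L)%N.

Lemma trap_next_le y x : (y <= n.+1)%N -> (x <= N)%N -> (trap_next y x <= N)%N.
Proof. by rewrite /trap_next; repeat case: ifP; lia. Qed.

Lemma trap_next_spec y x : (0 < y <= n.+1)%N -> (x <= N)%N -> x != y ->
  trap_adj x (trap_next y x) /\ (trap_dist y (trap_next y x)).+1 = trap_dist y x.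
Proof.
move=> /andP[y_gt0 y_le] xN /negbTE xy.
rewrite /trap_adj /trap_next /trap_dist xy.
by repeat case: ifP => /=; intros; split; lia.
Qed.

Lemma trap_dist_adj y x z : (0 < y <= n.+1)%N -> trap_adj x z ->
  (trap_dist y x <= (trap_dist y z).+1)%N.
Proof.
move=> /andP[y_gt0 y_le]; rewrite /trap_adj /trap_dist.
by repeat case: ifP => /=; lia.
Qed.
End TrapGraph.

Section TrapMDP.
Variables (n L : nat) (j0 : 'I_n).
Hypothesis L_gt0 : (0 < L)%N.
Local Notation N := (n + L)%N.

Definition trap_reward (i : 'I_n) : nat := if i == j0 then n.+1 else i.+1.

Definition trap_mdp : crd_mdp n :=
  @CRD n N.+1 (fun x z => trap_adj n L x z) ord0 (fun i => inord (trap_reward i))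
    (fun j x => inord (trap_next n L (trap_reward j) x)).
Local Notation M := trap_mdp.

Lemma trap_reward_range i : (0 < trap_reward i <= n.+1)%N.
Proof. by rewrite /trap_reward; case: eqP => _ //=; rewrite ltnS ltnW. Qed.

Lemma trap_reward_le i : i != j0 -> (trap_reward i <= n)%N.
Proof. by rewrite /trap_reward => /negbTE->. Qed.

Lemma val_trap_srew i : val (srew M i) = trap_reward i.
Proof. by rewrite /= inordK //; have := trap_reward_range i; lia. Qed.

Lemma val_trap_opt j (x : 'I_N.+1) : val (opt M j x) = trap_next n L (trap_reward j) x.
Proof.
have /andP[_ yn] := trap_reward_range j.
by rewrite /= inordK // ltnS trap_next_le // -ltnS.
Qed.

Lemma trap_mdp_descent i (x : 'I_N.+1) : x != srew M i ->
  adj M x (opt M i x) /\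
  (trap_dist n L (trap_reward i) (opt M i x)).+1 = trap_dist n L (trap_reward i) x.
Proof.
move=> xi; rewrite /= val_trap_opt; apply: trap_next_spec (ltn_ord x) _ => //.
  exact: trap_reward_range.
by rewrite -val_trap_srew (inj_eq val_inj).
Qed.

Lemma trap_dist_target i : trap_dist n L (trap_reward i) (srew M i) = 0%N.
Proof. by rewrite val_trap_srew /trap_dist eqxx. Qed.

Lemma trap_distE i x : dist (adj M) x (srew M i) = trap_dist n L (trap_reward i) x.
Proof.
apply: (dist_potential (h := fun x : 'I_N.+1 => trap_dist n L (trap_reward i) x)).
- exact: trap_dist_target.
- by move=> {}x /trap_mdp_descent[]; exists (opt M i x).
- by move=> x' z; apply: trap_dist_adj (trap_reward_range i).
Qed.

Lemma trap_mdp_wf : crd_wf M.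
Proof.
split; [|split].
- move=> i i' /(congr1 val); rewrite !val_trap_srew /trap_reward.
  case: (eqVneq i j0) => [->|ij]; case: (eqVneq i' j0) => [->|i'j] //=;
    do ?[by case=> /val_inj | have := ltn_ord i; have := ltn_ord i'; lia].
- move=> x j; exists (trap_dist n L (trap_reward j) x).
  apply: (reachb_potential (h := fun x : 'I_N.+1 => trap_dist n L (trap_reward j) x)).
    exact: trap_dist_target.
  by move=> {}x /trap_mdp_descent[]; exists (opt M j x).
- by move=> x j /trap_mdp_descent; rewrite !trap_distE.
Qed.

Lemma trap_dist_clique (x y : 'I_N.+1) :
  (x <= n)%N -> (y <= n)%N -> (dist (adj M) x y <= 1)%N.
Proof.
move=> xn yn; apply: (@dist_min _ _ 1) => /=; apply/existsP; exists y.
by rewrite eqxx andbT /trap_adj xn yn.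
Qed.

Section Order.
Variable p : {perm 'I_n}.
Hypothesis p_avoid : forall i : 'I_n, (i < n.-1)%N -> p i != j0.

Lemma trap_order_path_clique t :
  (t < n)%N -> (val (nth (s0 M) (order_path M p) t) <= n)%N.
Proof.
case: t => [|u] // un; rewrite /order_path /= (nth_map j0) ?size_enum_ord; last lia.
rewrite val_trap_srew trap_reward_le // p_avoid // nth_enum_ord //; lia.
Qed.

Lemma trap_order_time j : (j < n.-1)%N -> (order_time M p j <= j.+1)%N.
Proof.
move=> jn; apply: leq_trans (_ : \sum_(t < j.+1) 1 <= _)%N; last first.
  by rewrite sum_nat_const card_ord muln1.
apply: leq_sum => t _; have := ltn_ord t.
by move=> tj; apply: trap_dist_clique; apply: trap_order_path_clique; lia.
Qed.
End Order.
End TrapMDP.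

Section TrapValue.
Variables (R : realFieldType) (n : nat) (pi : det_local_policy R n).
Hypothesis n_gt1 : (1 < n)%N.
Local Notation gamma := (1 - n%:R^-1 : R).

Definition first_choice : 'I_n := pi 0%N (Hist [:: 0%N] [::] set0) (fun _ => gamma).
Local Notation M := (trap_mdp (n * n) first_choice).

Let n_gt0 : (0 < n)%N. Proof. exact: ltnW. Qed.
Let sq_gt0 : (0 < n * n)%N. Proof. by rewrite muln_gt0 n_gt0. Qed.

Lemma trap_srew_neq_s0 i : srew M i != s0 M.
Proof.
rewrite -(inj_eq val_inj) val_trap_srew //=.
by have := trap_reward_range first_choice i; lia.
Qed.

Lemma trap_dist_s0 i : dist (adj M) (s0 M) (srew M i) = 1%N.
Proof.
rewrite trap_distE // /trap_dist /= andbF; case: eqP => // i0.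
by have := trap_reward_range first_choice i; rewrite -i0.
Qed.

Lemma trap_dist_entry i : i != first_choice ->
  dist (adj M) (srew M first_choice) (srew M i) = (n * n).+1.
Proof.
move=> ij; rewrite trap_distE // val_trap_srew // /trap_dist.
have -> : trap_reward first_choice first_choice = n.+1 by rewrite /trap_reward eqxx.
by have := trap_reward_le ij; case: eqP; rewrite ?ltnn; lia.
Qed.

Lemma trap_visited_one : visited M gamma pi 1 = [:: s0 M; srew M first_choice].
Proof.
have collected0 : [set i | srew M i \in [:: s0 M]] = set0.
  by apply/setP => i; rewrite !inE (negbTE (trap_srew_neq_s0 i)).
have values0 : optval gamma (s0 M) = fun _ => gamma.
  by apply: funext => i; rewrite /optval trap_dist_s0 expr1.
rewrite visited_one collected0 values0 -/first_choice /option_path trap_dist_s0 /=.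
by rewrite /trap_reward eqxx /trap_next leq0n eqxx orbT.
Qed.

Lemma trap_collect_late i t :
  i != first_choice -> at_time M gamma pi i t -> (n * n <= t)%N.
Proof.
move=> ij /(dist_lt_at_time (trap_mdp_wf first_choice sq_gt0) trap_visited_one).
by rewrite trap_dist_entry // => /(_ (trap_srew_neq_s0 i)); lia.
Qed.

Lemma trap_policy_value_le : policy_value M gamma pi <= 2.
Proof.
have := policy_value_le (discount_ge0 R n_gt0) (discount_le1 R n) trap_collect_late.
by have := discount_pow_sq_le R n_gt1; lra.
Qed.

Lemma trap_OPT_ge : n.-1%:R / 2 <= OPT M gamma.
Proof.
have last_lt : (n.-1 < n)%N by rewrite ltn_predL.
pose p := tperm first_choice (Ordinal last_lt).
have p_avoid (i : 'I_n) : (i < n.-1)%N -> p i != first_choice.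
  move=> il; rewrite -[X in _ != X](tpermR first_choice (Ordinal last_lt)) (inj_eq perm_inj).
  by apply: contraTneq il => ->; rewrite ltnn.
apply: le_trans (OPT_ge_order _ _ p).
rewrite (bigID (fun j : 'I_n => (j < n.-1)%N)) /= -[leLHS]addr0.
apply: lerD; last by apply: sumr_ge0 => j _; apply: exprn_ge0; apply: discount_ge0.
rewrite -(sum_linear_discount R n_gt0).
rewrite (big_ord_widen n (fun j => 1 - j.+1%:R / n%:R)) ?leq_pred //.
apply: ler_sum => j jn; apply: le_trans (bernoulli_discount _ _ n_gt0) _.
apply: ler_wiXn2l (discount_ge0 _ n_gt0) (discount_le1 _ _) _ _ _.
exact: trap_order_time.
Qed.
End TrapValue.

Definition unit_mdp : crd_mdp 1 :=
  @CRD 1 1 (fun _ _ => true) ord0 (fun _ => ord0) (fun _ _ => ord0).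

Lemma unit_mdp_wf : crd_wf unit_mdp.
Proof.
split; [|split].
- by move=> i j _; rewrite !ord1.
- by move=> x j; exists 0%N; rewrite /= !ord1.
- by move=> x j; rewrite !ord1 eqxx.
Qed.

Lemma unit_mdp_OPT_ge (R : realFieldType) (g : R) : 1 <= OPT unit_mdp g.
Proof.
apply: le_trans (OPT_ge_order _ _ 1%g); rewrite big_ord1 /order_time big_ord1.
have dist0 (x y : 'I_1) : dist (adj unit_mdp) x y = 0%N.
  by apply/eqP; rewrite -leqn0; apply: (@dist_min _ _ 0); rewrite /= !ord1.
by rewrite dist0 expr0.
Qed.

Lemma unit_mdp_value_le (R : realFieldType) (g : R) (pi : det_local_policy R 1) :
  0 <= g -> g <= 1 -> policy_value unit_mdp g pi <= 2.
Proof.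
move=> g_ge0 g_le1; have := @policy_value_le _ _ unit_mdp g pi ord0 0 g_ge0 g_le1.
by rewrite expr0 mulr1; apply => i t; rewrite ord1 eqxx.
Qed.

Lemma value_ratio_le (R : realFieldType) n (v o c : R) : (0 < n)%N -> 0 < c ->
  c <= o -> v <= 2 -> 2 * n%:R <= 24 * c -> v / o <= 24 / n%:R.
Proof.
move=> n_gt0 c_gt0 co v_le nc; have o_gt0 : 0 < o by apply: lt_le_trans co.
rewrite ler_pdivrMr // mulrAC ler_pdivlMr ?ltr0n //.
by have := ler0n R n; nra.
Qed.

Unset Implicit Arguments.
Theorem theorem2 (R : realFieldType) (n : nat) (hn : (0 < n)%N)
  (pi : det_local_policy R n) :
  let gamma : R := 1 - n%:R^-1 in
  exists M : crd_mdp n,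
    crd_wf M /\ 0 < OPT M gamma /\
    policy_value M gamma pi / OPT M gamma <= 24 / n%:R.
Proof.
have [n_gt1|n_le1] := ltnP 1 n; last first.
  move: pi; have -> : n = 1%N by apply/eqP; rewrite eqn_leq n_le1.
  move=> pi gamma; exists unit_mdp; have OPT_ge := unit_mdp_OPT_ge gamma.
  have value_le := unit_mdp_value_le pi (discount_ge0 R (ltn0Sn 0)) (discount_le1 R 1).
  split; [exact: unit_mdp_wf | split; first exact: lt_le_trans OPT_ge].
  by apply: value_ratio_le OPT_ge value_le _ => //; lra.
move=> gamma; exists (trap_mdp (n * n) (first_choice pi)).
have OPT_ge := trap_OPT_ge pi n_gt1.
have nE : n%:R = n.-1%:R + 1 :> R by rewrite natr1 prednK // ltnW.
have m_ge1 : 1 <= n.-1%:R :> R by rewrite ler1n -ltnS prednK // ltnW.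
split; first by apply: trap_mdp_wf; rewrite muln_gt0 andbb ltnW.
split; first by apply: lt_le_trans OPT_ge; lra.
apply: value_ratio_le OPT_ge (trap_policy_value_le pi n_gt1) _ => //; rewrite ?nE; lra.
Qed.
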